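(* Let $\psi:\mathbb{R}\to\mathbb{R}$ satisfy $|\psi(x)|\leq C(1+|x|)^{-1-\varepsilon}$ for all $x\in\mathbb{R}$, for some constants $C,\varepsilon>0$. Let $\{a_I:I\in\mathcal{D}\}$ be independent random variables on $(\Omega,\mathscr{F},\mathscr{P})$ with $a_I\in\mathscr{G}(\nu)$ for every $I$, for some fixed $\nu>0$, and with $\sum_{I\in\mathcal{D}}\mathscr{E}|a_I|<\infty$. Then for every $x\neq y$ in $\mathbb{R}$, the series $$K(x,y;\omega)=\sum_{I\in\mathcal{D}}a_I(\omega)\psi_I(x)\psi_I(y)$$ converges for $\mathscr{P}$-almost every $\omega\in\Omega$.
   Context: $\mathcal{D}=\bigcup_{j\in\mathbb{Z}}\mathcal{D}^j$ is the family of dyadic intervals of $\mathbb{R}$, $\mathcal{D}^j=\{I^j_k=[k2^{-j},(k+1)2^{-j}):k\in\mathbb{Z}\}$. For $I=I^j_k$, $\psi_I(x)=2^{j/2}\psi(2^jx-k)$. For an integrable random variable $X$, $\eta_{X-\mathscr{E}X}(\lambda)=\log \mathscr{E}e^{\lambda(X-\mathscr{E}X)}$, and $X\in\mathscr{G}(\nu)$ means $X$ is integrable and $\eta_{X-\mathscr{E}X}(\lambda)\leq \lambda^2\nu/2$ for all $\lambda\in\mathbb{R}$. (The series is understood along any fixed enumeration of $\mathcal{D}$.) *)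

From HB Require Import structures.
From mathcomp Require Import all_boot all_order all_algebra.
From mathcomp Require Import all_classical all_reals all_analysis.
Set Implicit Arguments. Unset Strict Implicit. Unset Printing Implicit Defensive.
Import Order.TTheory GRing.Theory Num.Theory.
Local Open Scope classical_set_scope.
Local Open Scope ring_scope.

(* Dyadic intervals I^j_k = [k 2^-j, (k+1) 2^-j) are indexed by (j,k) : int * int. *)
Definition dyadic := (int * int)%type.

Definition psiI {R : realType} (psi : R -> R) (I : dyadic) (x : R) : R :=
  (2 : R) `^ ((I.1)%:~R / 2) * psi ((2 : R) `^ ((I.1)%:~R) * x - (I.2)%:~R).

Definition mutually_independent {d} {T : measurableType d} {R : realType}
  (P : probability T R) (I : eqType) (X : I -> T -> R) : Prop :=
  forall (s : seq I) (B : I -> set R),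
    uniq s -> (forall i, i \in s -> measurable (B i)) ->
    P (\big[setI/setT]_(i <- s) (X i @^-1` B i)) =
    (\prod_(i <- s) P (X i @^-1` B i))%E.

(* X \in G(nu): X integrable and eta_{X - E X}(lambda) <= lambda^2 nu / 2 for all
   real lambda, where eta_Y(lambda) = log E e^{lambda Y}; stated equivalently
   (log is increasing) as E e^{lambda (X - E X)} <= exp(lambda^2 nu / 2). *)
Definition subgaussian {d} {T : measurableType d} {R : realType}
  (P : probability T R) (nu : R) (X : T -> R) : Prop :=
  P.-integrable setT (EFin \o X) /\
  forall lambda : R,
    ('E_P[fun w => expR (lambda * (X w - fine 'E_P[X]))] <=
     (expR (lambda ^+ 2 * nu / 2))%:E)%E.

(* The series in fact converges ABSOLUTELY almost surely. From the decay |psi u| <= C (1+|u|)^(-1-eps) we get |psi u| (1+|u|) <= C,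
      and since |(2^j x - k) - (2^j y - k)| = 2^j |x - y| this yields the bound
      |psi_I(x) psi_I(y)| <= C^2 / |x - y|, uniform in the dyadic interval I.
   2. By monotone convergence, sum_n E|a_(e n)| < oo (the hypothesis, reindexed
      along the enumeration e) means that the nonnegative random variable
      sum_n |a_(e n)| has finite expectation, hence is finite almost surely.
   3. A series whose terms are an absolutely summable sequence times a bounded
      sequence converges.
   The theorem combines 1-3 pointwise on the almost sure event of 2. *)
From HB Require Import structures.
From mathcomp Require Import all_boot all_order all_algebra.
From mathcomp Require Import all_classical all_reals all_analysis.
From mathcomp Require Import ring lra measurable_realfun.
Set Implicit Arguments. Unset Strict Implicit.
Import Order.TTheory GRing.Theory Num.Theory numFieldNormedType.Exports.
Local Open Scope classical_set_scope.
Local Open Scope ring_scope.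

Lemma decay_mul_bound (R : realType) (psi : R -> R) (C eps : R) :
  0 < eps -> (forall x : R, `|psi x| <= C * (1 + `|x|) `^ (- 1 - eps)) ->
  forall u, `|psi u| * (1 + `|u|) <= C.
Proof.
move=> eps_gt0 decay u.
have ge1 : 1 <= 1 + `|u| by rewrite lerDl.
have gt0 : 0 < 1 + `|u| by apply: lt_le_trans ge1.
have pow_le_inv : (1 + `|u|) `^ (- 1 - eps) <= (1 + `|u|)^-1.
  by rewrite -(powR_inv1 (ltW gt0)); apply: (ler_powR ge1); lra.
have C_ge0 : 0 <= C.
  have : 0 <= C * (1 + `|u|) `^ (-1 - eps) by apply: le_trans (decay u).
  by rewrite pmulr_lge0 // powR_gt0.
rewrite -ler_pdivlMr // mulrC; apply: le_trans (decay u) _.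
by rewrite [X in _ <= X]mulrC; apply: ler_wpM2l.
Qed.

(* Writing
   u = 2^j x - k, v = 2^j y - k one has psi_I(x) psi_I(y) = 2^j psi u psi v
   and 2^j |x - y| = |u - v| <= (1+|u|)(1+|v|). *)
Lemma psiI_product_bound (R : realType) (psi : R -> R) (C : R) (x y : R) :
  (forall u, `|psi u| * (1 + `|u|) <= C) -> x != y ->
  forall I : dyadic, `|psiI psi I x * psiI psi I y| <= C ^+ 2 / `|x - y|.
Proof.
move=> decay xy [j k]; rewrite /psiI /=.
set s := (2 : R) `^ (j%:~R / 2); set t := (2 : R) `^ j%:~R.
have ss : s * s = t.
  rewrite /s /t -powRD; last by rewrite pnatr_eq0 implybT.
  by congr (_ `^ _); field.
have t_gt0 : 0 < t by rewrite powR_gt0.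
have dxy_gt0 : 0 < `|x - y| by rewrite normr_gt0 subr_eq0.
set u := t * x - k%:~R; set v := t * y - k%:~R.
have -> : s * psi u * (s * psi v) = t * (psi u * psi v) by rewrite -ss; ring.
rewrite normrM (gtr0_norm t_gt0) normrM ler_pdivlMr //.
have scale : t * `|x - y| = `|u - v|.
  have -> : u - v = t * (x - y) by rewrite /u /v; ring.
  by rewrite normrM gtr0_norm.
have uv_le : t * `|x - y| <= (1 + `|u|) * (1 + `|v|).
  have := ler_normB u v; have := normr_ge0 u; have := normr_ge0 v.
  rewrite scale; nra.
have pu := normr_ge0 (psi u); have pv := normr_ge0 (psi v).
have prod_le : (`|psi u| * (1 + `|u|)) * (`|psi v| * (1 + `|v|)) <= C * C.
  apply: ler_pM => //; apply: mulr_ge0 => //; rewrite addr_ge0.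
rewrite expr2; apply: le_trans prod_le.
have -> : t * (`|psi u| * `|psi v|) * `|x - y| =
          `|psi u| * `|psi v| * (t * `|x - y|) by ring.
have -> : `|psi u| * (1 + `|u|) * (`|psi v| * (1 + `|v|)) =
          `|psi u| * `|psi v| * ((1 + `|u|) * (1 + `|v|)) by ring.
by have := ler_wpM2l (mulr_ge0 pu pv) uv_le.
Qed.

(* If the integrals of |f n| are summable, then sum_n |f n| is finite almost
   everywhere: by monotone convergence its integral is the sum of the
   integrals, and an integrable function is finite a.e. *)
Lemma ae_summable_abs d (T : measurableType d) (R : realType)
    (mu : {measure set T -> \bar R}) (f : nat -> T -> R) :
  (forall n, measurable_fun [set: T] (f n)) ->
  (\sum_(n <oo) \int[mu]_w (`|f n w|)%:E < +oo)%E ->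
  {ae mu, forall w, (\sum_(n <oo) (`|f n w|)%:E < +oo)%E}.
Proof.
move=> mf summable.
pose F w := (\sum_(n <oo) (`|f n w|)%:E)%E.
have mabs n : measurable_fun [set: T] (fun w => (`|f n w|)%:E).
  by apply: measurableT_comp => //; apply: measurableT_comp.
have F_ge0 w : (0 <= F w)%E by apply: nneseries_ge0 => n _; rewrite lee_fin.
have intF : mu.-integrable setT F.
  apply/integrableP; split.
    by apply: (@ge0_emeasurable_sum _ T R setT (fun n w => (`|f n w|)%:E) xpredT).
  under eq_integral => w _ do rewrite gee0_abs //.
  by rewrite /F integral_nneseries.
apply: filterS (integrable_ae measurableT intF) => w /(_ I) F_fin.
by rewrite -ge0_fin_numE; [exact: F_fin | exact: F_ge0].
Qed.

Lemma esum_expectation_enum d (T : measurableType d) (R : realType)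
    (P : probability T R) (X : dyadic -> T -> R) (e : nat -> dyadic) :
  bijective e ->
  (\esum_(I in [set: dyadic]) 'E_P[fun w => `|X I w|%R] =
   \sum_(n <oo) \int[P]_w (`|X (e n) w|)%:E)%E.
Proof.
move=> be; rewrite (reindex_esum setT setT e) ?setTT_bijective //.
rewrite -nneseries_esumT; last first.
  by move=> n; rewrite unlock; apply: integral_ge0 => w _; rewrite lee_fin.
by under eq_eseriesr do rewrite expectation.unlock.
Qed.

Lemma cvg_series_weighted (R : realType) (u c : nat -> R) (M : R) :
  (forall n, `|c n| <= M) -> (\sum_(n <oo) (`|u n|)%:E < +oo)%E ->
  cvgn (series (fun n => u n * c n)).
Proof.
move=> c_le summable.
have M_ge0 : 0 <= M by apply: le_trans (c_le 0%N).
apply: normed_cvg; apply: nondecreasing_is_cvgn.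
  by apply: nondecreasing_series => n _ _; apply: normr_ge0.
have sum_ge0 : (0 <= \sum_(n <oo) (`|u n|)%:E)%E.
  by apply: nneseries_ge0 => n _; rewrite lee_fin.
exists (M * fine (\sum_(n <oo) (`|u n|)%:E)%E) => _ [n _ <-].
apply: (@le_trans _ _ (\sum_(0 <= k < n) M * `|u k|)).
  by apply: ler_sum => k _ /=; rewrite normrM mulrC ler_wpM2r.
rewrite -mulr_sumr ler_wpM2l // -lee_fin fineK ?ge0_fin_numE //.
by rewrite -sumEFin; apply: nneseries_lim_ge.
Qed.

Theorem theorem3p1 (d : measure_display) (T : measurableType d) (R : realType)
  (P : probability T R) (psi : R -> R) (C eps nu : R)
  (a : dyadic -> {RV P >-> R}) :
  0 < C -> 0 < eps ->
  (forall x : R, `|psi x| <= C * (1 + `|x|) `^ (- 1 - eps)) ->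
  mutually_independent P (fun I => (a I : T -> R)) ->
  0 < nu ->
  (forall I, subgaussian P nu (a I)) ->
  (\esum_(I in [set: dyadic]) 'E_P[fun w => `|a I w|%R] < +oo)%E ->
  forall (e : nat -> dyadic), bijective e ->
  forall x y : R, x != y ->
  {ae P, forall w, cvgn (series (fun n => a (e n) w * psiI psi (e n) x * psiI psi (e n) y))}.
Proof.
move=> _ eps_gt0 decay _ _ _ summable e be x y xy.
have weight_bound := psiI_product_bound (decay_mul_bound eps_gt0 decay) xy.
rewrite (esum_expectation_enum P (fun I => a I) be) in summable.
have mf : forall n, measurable_fun [set: T] (a (e n)) by [].
apply: filterS (ae_summable_abs mf summable) => w abs_summable.
rewrite (_ : (fun n => _) =
             fun n => a (e n) w * (psiI psi (e n) x * psiI psi (e n) y)).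
  exact: cvg_series_weighted (fun n => weight_bound (e n)) abs_summable.
by apply/funext => n; rewrite mulrA.
Qed.
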